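(* Let $\sigma:\mathbb{R}\to\mathbb{R}$ be either a continuous and strictly monotonic function or the ReLU function $\sigma(t)=\max\{t,0\}$. Let $F:\mathbb{R}^{d_{in}}\to\mathbb{R}^{d_{out}}$ be a neural network function with activation function $\sigma$ and width $\omega_F\le d_{in}$. Then for every $j\in\{1,\dots,d_{out}\}$, every non-empty connected component of the decision region $C_j$ of $F$ is unbounded.
   Context: A neural network function $F:\mathbb{R}^{d_{in}}\to\mathbb{R}^{d_{out}}$ with $L$ layers and activation $\sigma$ has the form $F=W_L\circ A_{L-1}\circ\dots\circ A_1$, where $A_j(x)=\sigma(W_jx+b_j)$ with $W_j\in\mathbb{R}^{d_j\times d_{j-1}}$, $b_j\in\mathbb{R}^{d_j}$, $d_0=d_{in}$, $d_L=d_{out}$, $W_L\in\mathbb{R}^{d_L\times d_{L-1}}$, and $\sigma$ is applied componentwise. The width of $F$ is $\omega_F=\max\{d_j:j=1,\dots,L\}$. Writing $F=(F_1,\dots,F_{d_{out}})$, the decision region of class $j$ is $C_j=\{x\in\mathbb{R}^{d_{in}}:F_j(x)>F_k(x)\text{ for all }k\neq j\}$. A set $C\subset\mathbb{R}^d$ is connected if there are no disjoint open sets $U,V\subset\mathbb{R}^d$ with $C\subset U\cup V$ and $C\cap U$, $C\cap V$ both non-empty; the connected components of an open set are its maximal connected subsets. *)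

From HB Require Import structures.
From mathcomp Require Import all_boot all_order all_algebra.
From mathcomp Require Import all_classical all_reals all_analysis.
Set Implicit Arguments. Unset Strict Implicit. Unset Printing Implicit Defensive.
Import Order.TTheory GRing.Theory Num.Theory.
Import numFieldNormedType.Exports.
Local Open Scope ring_scope.
Local Open Scope classical_set_scope.

(* Vectors of R^d are column vectors 'cV[R]_d.
   - [Out W] : the final linear layer W_L : R^(d_{L-1}) -> R^(d_L) (no bias).
   - [Hidden W b N] : a hidden layer A(x) = sigma(W x + b), with W : k x m,
     followed by the rest of the network N : R^k -> R^n. *)
Inductive net (R : Type) : nat -> nat -> Type :=
| Out : forall m n : nat, 'M[R]_(n, m) -> net R m n
| Hidden : forall m k n : nat, 'M[R]_(k, m) -> 'cV[R]_k -> net R k n -> net R m n.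

Fixpoint net_eval (R : pzRingType) (sigma : R -> R) (m n : nat) (N : net R m n)
  : 'cV[R]_m -> 'cV[R]_n :=
  match N in net _ m n return 'cV[R]_m -> 'cV[R]_n with
  | Out _ _ W => fun x => W *m x
  | Hidden _ _ _ W b N' => fun x => net_eval sigma N' (map_mx sigma (W *m x + b))
  end.

Fixpoint net_width (R : Type) (m n : nat) (N : net R m n) : nat :=
  match N with
  | Out _ n _ => n
  | Hidden _ k _ _ _ N' => maxn k (net_width N')
  end.

Definition decision_region (R : numDomainType) (din dout : nat)
  (F : 'cV[R]_din -> 'cV[R]_dout) (j : 'I_dout) : set 'cV[R]_din :=
  [set x | forall k : 'I_dout, k != j -> F x k ord0 < F x j ord0].

Definition relu (R : realDomainType) (t : R) : R := Num.max t 0.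

(* Write the network as its final linear layer after the map Psi computed by
   the hidden layers, and follow Psi layer by layer.  Either every component
   of a preimage Psi^-1(V) of an open set V is unbounded, or Psi preserves
   bounded components (a bounded component of Psi^-1(V) through x forces the
   component of V through Psi x to be bounded) and its codomain has dimension
   at least d_in.  A layer sigma(W y + b) of width <= d_in keeps this
   dichotomy: if W has a kernel, the layer is constant along a line, so its
   preimage components contain rays; otherwise W is square and invertible,
   and the layer preserves bounded components because it maps them onto open
   sets (by the intermediate value theorem for strictly monotone sigma; for
   ReLU because a bounded component lies in the open positive orthant, where
   ReLU is the identity).  At the output, the decision region of a linear map
   is an open cone, so its component through a point contains a ray. *)

From HB Require Import structures.
From mathcomp Require Import all_boot all_order all_algebra.
From mathcomp Require Import all_classical all_reals all_analysis.
From mathcomp Require Import lra.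
Set Implicit Arguments.
Unset Strict Implicit.
Unset Printing Implicit Defensive.
Import Order.TTheory GRing.Theory Num.Theory.
Import numFieldNormedType.Exports.
Local Open Scope ring_scope.
Local Open Scope classical_set_scope.

Section normed_space.
Variables (R : realType) (V : normedModType R).
Implicit Types (A B : set V) (x v : V).

Lemma bounded_setP A : bounded_set A <-> exists M, forall y, A y -> `|y| <= M.
Proof.
split => [[M [_ AM]]|[M AM]].
  by exists (M + 1) => y Ay; apply: AM; rewrite ?ltrDl.
exists M; split; first exact: num_real.
by move=> N /ltW MN y Ay; exact: le_trans (AM y Ay) MN.
Qed.

Lemma bounded_setS A B : A `<=` B -> bounded_set B -> bounded_set A.
Proof.
by move=> AB /bounded_setP[M BM]; apply/bounded_setP; exists M => y /AB/BM.
Qed.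

Lemma bounded_closure A : bounded_set A -> bounded_set (closure A).
Proof.
move=> /bounded_setP[M AM]; apply/bounded_setP; exists M.
have closed_ball : closed [set y : V | `|y| <= M].
  exact: (preimage_closed (fun y _ => @norm_continuous _ V y) (@closed_le _ M)).
suff : closure A `<=` [set y : V | `|y| <= M] by move=> clAM y /clAM.
by rewrite [X in _ `<=` X](closure_id _).1 //; exact: closureS.
Qed.

Definition ray x v : set V := [set x + t *: v | t in `[0, +oo[].

Lemma ray_connected x v : connected (ray x v).
Proof.
apply: connected_continuous_connected.
  exact/connected_intervalP/interval_is_interval.
apply: continuous_subspaceT => t; apply: cvgD; first exact: cvg_cst.
exact: (@continuousZr_tmp _ _ _ id).
Qed.

Lemma ray_unbounded x v : v != 0 -> ~ bounded_set (ray x v).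
Proof.
move=> v0 /bounded_setP[M rayM].
have v_gt0 : 0 < `|v| by rewrite normr_gt0.
pose t := (M + `|x| + 1) / `|v|.
have x_le : `|x| <= M.
  by apply: rayM; exists 0; rewrite ?scale0r ?addr0 //= in_itv /= lexx.
have t_ge0 : 0 <= t by rewrite divr_ge0 //; have := normr_ge0 x; lra.
have tv : `|t *: v| = M + `|x| + 1 by rewrite normrZ ger0_norm // divfK ?gt_eqF.
have : `|t *: v| <= `|x + t *: v| + `|x|.
  by rewrite -{1}(addKr x (t *: v)) (le_trans (ler_normD _ _)) // normrN addrC.
have : `|x + t *: v| <= M by apply: rayM; exists t; rewrite //= in_itv /= t_ge0.
rewrite tv; lra.
Qed.

Lemma connected_component_ray_unbounded A x v : v != 0 -> ray x v `<=` A ->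
  ~ bounded_set (connected_component A x).
Proof.
move=> v0 rayA bA; apply: (@ray_unbounded x v v0); apply: bounded_setS bA.
apply: connected_component_max => //; last exact: ray_connected.
by exists 0; rewrite ?scale0r ?addr0 //= in_itv /= lexx.
Qed.

Lemma ball_connected x e : connected (ball x e).
Proof.
pose segment y := [set x + t *: (y - x) | t in `[0, 1]].
have -> : ball x e = \bigcup_(y in ball x e) segment y.
  apply/seteqP; split => [y xey|_ [y xey [t t01 <-]]].
    exists y => //; exists 1; first by rewrite /= in_itv /= ler01 lexx.
    by rewrite scale1r addrC subrK.
  move: xey t01; rewrite -!ball_normE /= in_itv /= => xey /andP[t0 t1].
  rewrite opprD addrA subrr sub0r normrN normrZ ger0_norm //.
  by rewrite (le_lt_trans _ xey) // -normrN opprB ler_piMl.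
apply: bigcup_connected => [|y _].
  by exists x => y _; exists 0; rewrite ?scale0r ?addr0 //= in_itv /= lexx ler01.
apply: connected_continuous_connected; first exact: segment_connected.
apply: continuous_subspaceT => t; apply: cvgD; first exact: cvg_cst.
exact: (@continuousZr_tmp _ _ _ id).
Qed.

Lemma open_connected_component A x : open A -> open (connected_component A x).
Proof.
move=> oA; rewrite openE => y Axy; rewrite /interior.
have /nbhs_ballP[e e0 yeA] : nbhs y A.
  exact/open_nbhs_nbhs/(conj oA)/(connected_component_sub Axy).
apply/nbhs_ballP; exists e => // z yez.
rewrite (same_connected_component Axy).
apply: connected_component_max yez => //; first exact: ballxx.
exact: ball_connected.
Qed.

Lemma connected_component_closure A x q : open A -> A q ->
  closure (connected_component A x) q -> connected_component A x q.
Proof.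
move=> oA Aq /(_ (connected_component A q)).
have Aqq : connected_component A q q by exact: connected_component_refl.
case=> [|z [Axz Aqz]].
  by apply: open_nbhs_nbhs; split => //; exact: open_connected_component.
rewrite (same_connected_component Axz).
by rewrite -(same_connected_component Aqz); exact: connected_component_refl.
Qed.

End normed_space.

Section matrix_topology.
Variable R : realType.

Lemma mx_norm_coord_le m n (x : 'M[R]_(m, n)) i j : `|x i j| <= `|x|.
Proof.
rewrite (_ : `|x| = mx_norm x) // mx_normrE.
by apply/bigmax_geP; right; exists (i, j).
Qed.

Lemma mx_norm_le m n (x : 'M[R]_(m, n)) M :
  0 <= M -> (forall i j, `|x i j| <= M) -> `|x| <= M.
Proof.
move=> M0 xM; rewrite (_ : `|x| = mx_norm x) // mx_normrE.
by apply/bigmax_leP; split => // -[].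
Qed.

Lemma mx_continuous (T : topologicalType) m n (f : T -> 'M[R]_(m, n)) :
  (forall i j, continuous (fun t => f t i j)) -> continuous f.
Proof.
move=> fC t; apply/cvg_ballP => e e0.
have e2 : 0 < e / 2 by rewrite divr_gt0.
have : \forall s \near t, forall ij : 'I_m * 'I_n,
    ball (f t ij.1 ij.2) (e / 2) (f s ij.1 ij.2).
  by apply: filter_forall => -[i j]; exact: (cvg_ball (fC i j t)).
apply: filterS => s fts; rewrite -ball_normE /=.
apply: le_lt_trans (_ : e / 2 < e); last by rewrite ltr_pdivrMr // ltr_pMr // ltr1n.
apply: mx_norm_le => [|i j]; first exact: ltW.
by have := fts (i, j); rewrite -ball_normE !mxE => /ltW.
Qed.

Lemma mulmx_continuous m n p (W : 'M[R]_(m, n)) :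
  continuous (fun x : 'M[R]_(n, p) => W *m x).
Proof.
apply: mx_continuous => i j; under eq_fun do rewrite mxE.
apply: continuous_big => [|k _ x]; first exact: add_continuous.
by apply: continuousM; [exact: cst_continuous | exact: coord_continuous].
Qed.

Lemma affine_continuous m n p (W : 'M[R]_(m, n)) (c : 'M[R]_(m, p)) :
  continuous (fun x : 'M[R]_(n, p) => W *m x + c).
Proof.
move=> x; apply: continuousD; first exact: mulmx_continuous.
exact: cst_continuous.
Qed.

Lemma map_mx_continuous m n (s : R -> R) :
  continuous s -> continuous (fun x : 'M[R]_(m, n) => map_mx s x).
Proof.
move=> sC; apply: mx_continuous => i j; under eq_fun do rewrite mxE.
by move=> x; apply: continuous_comp; [exact: coord_continuous | exact: sC].
Qed.

Lemma trmx_continuous m n : continuous (fun x : 'M[R]_(m, n) => x^T).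
Proof.
apply: mx_continuous => i j; under eq_fun do rewrite mxE.
exact: coord_continuous.
Qed.

Lemma mx_norm_trmx m n (x : 'M[R]_(m, n)) : `|x^T| = `|x|.
Proof.
apply/le_anti/andP; split; apply: mx_norm_le => // i j.
  by rewrite mxE; exact: mx_norm_coord_le.
by have := mx_norm_coord_le x^T j i; rewrite mxE.
Qed.

Lemma cV_bounded_closed_compact n (A : set 'cV[R]_n) :
  bounded_set A -> closed A -> compact A.
Proof.
move=> bA cA.
have -> : A = (fun v : 'rV[R]_n => v^T) @` [set v | A v^T].
  by apply/seteqP; split => [y Ay|_ [v Av <-] //]; exists y^T; rewrite /= trmxK.
apply: continuous_compact; first exact/continuous_subspaceT/trmx_continuous.
apply: bounded_closed_compact.
  move: bA => /bounded_setP[M AM]; apply/bounded_setP; exists M => v /AM.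
  by rewrite mx_norm_trmx.
exact: preimage_closed (fun v _ => @trmx_continuous _ _ v) cA.
Qed.

End matrix_topology.

Section bounded_components.
Variable R : realType.

Definition preserves_bounded_components (U W : normedModType R) (f : U -> W) :=
  forall (V : set W) x, open V -> V (f x) ->
  bounded_set (connected_component (f @^-1` V) x) ->
  bounded_set (connected_component V (f x)).

Definition unbounded_preimage_components (U W : normedModType R) (f : U -> W) :=
  forall (V : set W) x, open V -> V (f x) ->
  ~ bounded_set (connected_component (f @^-1` V) x).

Section composition.
Variables (U W X : normedModType R) (f : U -> W) (g : W -> X).
Hypothesis gC : continuous g.

Let open_preimage V : open V -> open (g @^-1` V).
Proof. by move=> oV; apply: open_comp => // y _; exact: gC. Qed.

Lemma preserves_bounded_components_comp :
  preserves_bounded_components f -> preserves_bounded_components g ->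
  preserves_bounded_components (g \o f).
Proof.
move=> fP gP V x oV Vgfx bD; have ogV := open_preimage oV.
exact: gP oV Vgfx (fP _ x ogV Vgfx bD).
Qed.

Lemma unbounded_preimage_components_comp :
  unbounded_preimage_components f -> unbounded_preimage_components (g \o f).
Proof. by move=> fU V x /open_preimage; exact: fU. Qed.

Lemma unbounded_preimage_components_comp_preserving :
  preserves_bounded_components f -> unbounded_preimage_components g ->
  unbounded_preimage_components (g \o f).
Proof.
move=> fP gU V x oV Vgfx bD; have ogV := open_preimage oV.
exact: gU oV Vgfx (fP _ x ogV Vgfx bD).
Qed.

End composition.

Lemma unbounded_preimage_components_invariant (U W : normedModType R)
    (f : U -> W) v :
  v != 0 -> (forall x t, f (x + t *: v) = f x) -> unbounded_preimage_components f.
Proof.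
move=> v0 fv V x _ Vfx; apply: (connected_component_ray_unbounded v0).
by move=> _ [t _ <-]; rewrite /preimage /= fv.
Qed.

(* The image of the component D is open by assumption, and it is closed in the
   component E of V through f x: there it coincides with the compact image of
   the closure of D, because a point of that closure mapped into V lies in the
   open component D. E being connected, E lies inside f(closure D). *)
Lemma open_image_preserves_bounded_components a (W : normedModType R)
    (f : 'cV[R]_a -> W) :
  continuous f ->
  (forall V x, open V -> V (f x) ->
    bounded_set (connected_component (f @^-1` V) x) ->
    open (f @` connected_component (f @^-1` V) x)) ->
  preserves_bounded_components f.
Proof.
move=> fC fDo V x oV Vfx bD; have ofV : open (f @^-1` V).
  by apply: open_comp => // y _; exact: fC.
set D := connected_component (f @^-1` V) x.
set E := connected_component V (f x).
have cK : compact (closure D).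
  apply: cV_bounded_closed_compact; first exact: bounded_closure.
  exact: closed_closure.
have cfK : compact (f @` closure D).
  by apply: continuous_compact => //; exact: continuous_subspaceT.
have EfD : E `&` f @` D = E.
  apply: component_connected.
  - exists (f x); split; first exact: connected_component_refl.
    by exists x => //; exact: connected_component_refl.
  - by exists (f @` D) => //; exact: fDo.
  - exists (f @` closure D).
      by apply: compact_closed cfK; exact: norm_hausdorff.
    apply/seteqP; split => y [Ey [z Dz fzy]]; split => //; exists z => //.
      exact: subset_closure.
    apply: connected_component_closure => //.
    by rewrite /preimage /= fzy; exact: connected_component_sub Ey.
apply: bounded_setS (compact_bounded cfK) => y; rewrite -EfD => -[_ [z Dz <-]].
by exists z => //; exact: subset_closure.
Qed.

Lemma homeo_preserves_bounded_components a (W : normedModType R)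
    (f : 'cV[R]_a -> W) (g : W -> 'cV[R]_a) :
  continuous f -> continuous g -> cancel f g -> cancel g f ->
  preserves_bounded_components f.
Proof.
move=> fC gC fK gK.
apply: open_image_preserves_bounded_components => // V x oV _ _.
set D := connected_component _ x.
have -> : f @` D = g @^-1` D.
  apply/seteqP; split => [_ [z Dz <-]|y Dy]; first by rewrite /preimage /= fK.
  by exists (g y).
apply: open_comp => [y _|]; first exact: gC.
by apply: open_connected_component; apply: open_comp => // y _; exact: fC.
Qed.

Lemma affine_preserves_bounded_components a (W : 'M[R]_a) (c : 'cV[R]_a) :
  W \in unitmx -> preserves_bounded_components (fun x => W *m x + c).
Proof.
move=> Wu; pose g y := invmx W *m y - invmx W *m c.
apply: (homeo_preserves_bounded_components (g := g)).
- exact: affine_continuous.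
- exact: affine_continuous.
- by move=> x; rewrite /g mulmxDr mulmxA mulVmx // mul1mx addrK.
- by move=> y; rewrite /g mulmxBr !mulmxA mulmxV // !mul1mx subrK.
Qed.

End bounded_components.

Section activation.
Variable R : realType.
Implicit Types s : R -> R.

Lemma increasing_continuous_surj_itv s u h z : continuous s ->
  {homo s : x y / x < y} -> 0 < h -> s (u - h) < z < s (u + h) ->
  exists2 w, `|u - w| <= h & s w = z.
Proof.
move=> sC sI h0 /andP[/ltW lo /ltW hi].
have uh : u - h <= u + h by lra.
have sh : s (u - h) <= s (u + h) by apply/ltW/sI; lra.
have [|w] := @IVT _ s _ _ z uh (continuous_subspaceT sC).
  by rewrite (min_l sh) (max_r sh) lo hi.
by rewrite in_itv /= => /andP[w1 w2] swz; exists w => //; rewrite ler_norml; lra.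
Qed.

Lemma open_map_mx_increasing m n s (D : set 'M[R]_(m, n)) :
  continuous s -> {homo s : x y / x < y} -> open D -> open (map_mx s @` D).
Proof.
move=> sC sI oD; rewrite openE => _ [d Dd <-].
have /nbhs_ballP[e e0 deD] : nbhs d D by exact: open_nbhs_nbhs.
pose h := e / 2; have h0 : 0 < h by rewrite divr_gt0.
have : \forall z \near map_mx s d, forall ij : 'I_m * 'I_n,
    s (d ij.1 ij.2 - h) < (z : 'M[R]_(m, n)) ij.1 ij.2 < s (d ij.1 ij.2 + h).
  apply: (@filter_forall _ _ _ (nbhs (map_mx s d)) _) => -[i j] /=.
  have zC : (fun z : 'M[R]_(m, n) => z i j) @ map_mx s d --> s (d i j).
    have -> : s (d i j) = map_mx s d i j by rewrite mxE.
    exact: coord_continuous.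
  have lo : s (d i j - h) < s (d i j) by apply: sI; rewrite ltrBlDr ltrDl.
  have hi : s (d i j) < s (d i j + h) by apply: sI; rewrite ltrDl.
  near=> z; apply/andP; split; near: z.
    exact: cvgr_gt zC _ lo.
  exact: cvgr_lt zC _ hi.
apply: filterS => z zbox.
have /choice[w dw] : forall ij : 'I_m * 'I_n,
    exists w, `|d ij.1 ij.2 - w| <= h /\ s w = z ij.1 ij.2.
  move=> ij; have [w ? ?] := increasing_continuous_surj_itv sC sI h0 (zbox ij).
  by exists w.
exists (\matrix_(i, j) w (i, j)); last first.
  by apply/matrixP => i j; rewrite !mxE (dw (i, j)).2.
apply: deD; rewrite -ball_normE /=.
apply: le_lt_trans (_ : h < e); last by rewrite ltr_pdivrMr // ltr_pMr // ltr1n.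
by apply: mx_norm_le => [|i j]; [exact: ltW | rewrite !mxE; exact: (dw (i, j)).1].
Unshelve. all: by end_near.
Qed.

Lemma map_mx_increasing_preserves a s :
  continuous s -> {homo s : x y / x < y} ->
  preserves_bounded_components (fun x : 'cV[R]_a => map_mx s x).
Proof.
move=> sC sI; apply: open_image_preserves_bounded_components => [|V x oV _ _].
  exact: map_mx_continuous.
apply: open_map_mx_increasing => //; apply: open_connected_component.
by apply: open_comp => // y _; exact: map_mx_continuous.
Qed.

Lemma map_mx_decreasing_preserves a s :
  continuous s -> {homo s : x y / x < y >-> y < x} ->
  preserves_bounded_components (fun x : 'cV[R]_a => map_mx s x).
Proof.
move=> sC sD.
have -> : (fun x : 'cV[R]_a => map_mx s x) =
    -%R \o (fun x => map_mx (fun t => - s t) x).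
  by apply/funext => x; apply/matrixP => i j; rewrite !mxE opprK.
apply: preserves_bounded_components_comp; first exact: oppr_continuous.
  apply: map_mx_increasing_preserves => [t|u v uv]; first exact/continuousN/sC.
  by rewrite ltrN2; exact: sD.
exact: homeo_preserves_bounded_components
  oppr_continuous oppr_continuous opprK opprK.
Qed.

Lemma relu_continuous : continuous (@relu R).
Proof.
by move=> t; apply: continuous_max; [exact: cvg_id | exact: cst_continuous].
Qed.

(* A point of a bounded component with a coordinate <= 0 would carry the ray
   decreasing that coordinate, on which the ReLU map is constant; so such a
   component lies in the open positive orthant, where the ReLU map is the
   identity. *)
Lemma map_mx_relu_preserves a :
  preserves_bounded_components (fun x : 'cV[R]_a => map_mx (@relu R) x).
Proof.
set f := fun x : 'cV[R]_a => map_mx (@relu R) x.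
have fC : continuous f by exact/map_mx_continuous/relu_continuous.
apply: open_image_preserves_bounded_components => // V x oV _ bD.
have ofV : open (f @^-1` V) by apply: open_comp => // y _; exact: fC.
set D := connected_component _ x in bD *.
have fD d : D d -> f d = d.
  move=> Dd; apply/matrixP => i j; rewrite mxE /relu max_l // ltW // ltNge.
  apply/negP => dij; move: bD; rewrite /D (same_connected_component Dd).
  apply: (@connected_component_ray_unbounded _ _ _ d (- delta_mx i j)).
    by rewrite oppr_eq0; apply/matrix0Pn; exists i, j; rewrite mxE !eqxx oner_eq0.
  move=> _ [t t0 <-]; rewrite /preimage /=.
  suff -> : f (d + t *: - delta_mx i j) = f d.
    exact: connected_component_sub Dd.
  apply/matrixP => k l; rewrite !mxE (ord1 l) (ord1 j).
  have [->|_] := eqVneq k i; last by rewrite mulr0n oppr0 mulr0 addr0.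
  move: t0 dij; rewrite /= in_itv /= andbT (ord1 j) mulrN1 /relu => t0 dij.
  by rewrite !max_r // (le_trans _ dij) // gerDl oppr_le0.
have -> : f @` D = D.
  apply/seteqP; split => [_ [d Dd <-]|d Dd]; first by rewrite fD.
  by exists d; rewrite ?fD.
exact: open_connected_component.
Qed.

End activation.

Lemma mulmx_rank_lt_kernel (F : fieldType) k m (W : 'M[F]_(k, m)) :
  (\rank W < m)%N -> exists2 v : 'cV[F]_m, v != 0 & W *m v = 0.
Proof.
move=> rW; have /matrix0Pn[i [j Cij]] : cokermx W != 0.
  by rewrite cokermx_eq0 /row_full ltn_eqF.
exists (col j (cokermx W)); first by apply/matrix0Pn; exists i, 0; rewrite mxE.
by rewrite colE mulmxA mulmx_coker mul0mx.
Qed.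

Section decision_regions.
Variable R : realType.

Lemma decision_region_open din dout (F : 'cV[R]_din -> 'cV[R]_dout) j :
  continuous F -> open (decision_region F j).
Proof.
move=> FC; rewrite openE => x Fx.
have coordC i : continuous (fun y => F y i 0).
  by move=> y; exact: continuous_comp (FC y) (@coord_continuous R _ _ i 0 (F y)).
suff : \forall y \near x, forall k, k != j -> F y k 0 < F y j 0 by [].
apply: (@filter_forall _ _ _ (nbhs x) _) => k.
have [->|kj] := eqVneq k j; first by apply: nearW.
have [kc cj] := midf_lt (Fx k kj).
near=> y => _; rewrite (lt_trans (_ : _ < (F x k 0 + F x j 0) / 2)) //; near: y.
  exact: cvgr_lt (coordC k x) _ kc.
exact: cvgr_gt (coordC j x) _ cj.
Unshelve. all: by end_near.
Qed.

Lemma decision_region_mulmx_ray m dout (W : 'M[R]_(dout, m)) j y : (0 < m)%N ->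
  decision_region (mulmx W) j y ->
  exists2 v, v != 0 & ray y v `<=` decision_region (mulmx W) j.
Proof.
move=> m0 Ky; have [y0|y0] := eqVneq y 0.
  exists (const_mx 1).
    by apply/matrix0Pn; exists (Ordinal m0), 0; rewrite mxE oner_eq0.
  by move=> z _ k kj; have := Ky k kj; rewrite y0 mulmx0 !mxE ltxx.
exists y => // _ [t t0 <-] k kj.
have t1 : 0 < 1 + t by move: t0; rewrite /= in_itv /= andbT; lra.
have -> : y + t *: y = (1 + t) *: y by rewrite scalerDl scale1r.
by move: (Ky k kj); rewrite -scalemxAr !mxE ltr_pM2l.
Qed.

Lemma decision_region_linear_unbounded n m dout (W : 'M[R]_(dout, m))
    (Psi : 'cV[R]_n -> 'cV[R]_m) j x :
  unbounded_preimage_components Psi \/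
    (preserves_bounded_components Psi /\ (0 < m)%N) ->
  decision_region (fun y => W *m Psi y) j x ->
  ~ bounded_set (connected_component (decision_region (fun y => W *m Psi y) j) x).
Proof.
move=> hPsi Kx; set K := decision_region (mulmx W) j.
have oK : open K by apply: decision_region_open; exact: mulmx_continuous.
case: hPsi => [Psi_unb|[Psi_pres m0]]; first exact: Psi_unb K x oK Kx.
move=> /(Psi_pres K x oK Kx).
have [v v0 rayK] := decision_region_mulmx_ray m0 Kx.
exact: connected_component_ray_unbounded v0 rayK.
Qed.

End decision_regions.

Section network.
Variables (R : realType) (sigma : R -> R).
Hypothesis sigmaC : continuous sigma.
Hypothesis sigmaP :
  forall a, preserves_bounded_components (fun x : 'cV[R]_a => map_mx sigma x).

Definition admissible n m (Psi : 'cV[R]_n -> 'cV[R]_m) :=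
  continuous Psi /\ (unbounded_preimage_components Psi \/
                     preserves_bounded_components Psi /\ (n <= m)%N).

Lemma admissible_layer n m k (W : 'M[R]_(k, m)) b (Psi : 'cV[R]_n -> 'cV[R]_m) :
  (k <= n)%N -> admissible Psi ->
  admissible (fun y => map_mx sigma (W *m Psi y + b)).
Proof.
move=> kn [PsiC hPsi].
pose A y := map_mx sigma (W *m y + b).
have AC : continuous A.
  move=> y; apply: continuous_comp; first exact: affine_continuous.
  exact: map_mx_continuous.
split; first by move=> y; exact: (continuous_comp (PsiC y) (AC (Psi y))).
case: hPsi => [Psi_unb|[Psi_pres nm]].
  by left; exact: (unbounded_preimage_components_comp AC).
have [rW|rW] := ltnP (\rank W) m.
  left; apply: (unbounded_preimage_components_comp_preserving AC) => //.
  have [v v0 Wv] := mulmx_rank_lt_kernel rW.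
  apply: (unbounded_preimage_components_invariant v0) => y t.
  by rewrite /A mulmxDr -scalemxAr Wv scaler0 addr0.
have km : k = m.
  by apply/eqP; rewrite eqn_leq (leq_trans kn nm) (leq_trans rW (rank_leq_row W)).
subst k; right; split => //.
apply: (preserves_bounded_components_comp AC) => //.
apply: (@preserves_bounded_components_comp _ _ _ _
  (fun y => W *m y + b) (fun y => map_mx sigma y) (map_mx_continuous sigmaC)) => //.
apply: affine_preserves_bounded_components.
by rewrite -row_free_unit /row_free eqn_leq rank_leq_row rW.
Qed.

Lemma admissible_decision_region_unbounded n m dout (N : net R m dout)
    (Psi : 'cV[R]_n -> 'cV[R]_m) :
  (net_width N <= n)%N -> admissible Psi -> forall j x,
  decision_region (fun y => net_eval sigma N (Psi y)) j x ->
  ~ bounded_set (connected_component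
                   (decision_region (fun y => net_eval sigma N (Psi y)) j) x).
Proof.
elim: N Psi => {m dout} [m dout W|m k dout W b N IH] Psi wN [PsiC hPsi] j x.
  apply: decision_region_linear_unbounded.
  case: hPsi => [|[Psi_pres nm]]; [by left | right; split => //].
  exact: leq_trans (leq_ltn_trans (leq0n j) (ltn_ord j)) (leq_trans wN nm).
move: wN; rewrite /= geq_max => /andP[kn wN].
exact: IH _ wN (admissible_layer W b kn (conj PsiC hPsi)) j x.
Qed.

End network.

Theorem theorem10 (R : realType) (sigma : R -> R)
  (hsigma : (continuous sigma /\
              ((forall s t : R, s < t -> sigma s < sigma t) \/
               (forall s t : R, s < t -> sigma t < sigma s)))
            \/ sigma = @relu R)
  (din dout : nat) (N : net R din dout)
  (hwidth : (net_width N <= din)%N)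
  (j : 'I_dout) (x : 'cV[R]_din) :
  decision_region (net_eval sigma N) j x ->
  ~ bounded_set (connected_component (decision_region (net_eval sigma N) j) x).
Proof.
have [sigmaC sigmaP] : continuous sigma /\
    forall a, preserves_bounded_components (fun x : 'cV[R]_a => map_mx sigma x).
  case: hsigma => [[sC [sI|sD]]|->].
  - by split => // a; exact: (map_mx_increasing_preserves sC sI).
  - by split => // a; exact: (map_mx_decreasing_preserves sC sD).
  - by split; [exact: relu_continuous | move=> a; exact: map_mx_relu_preserves].
have id_admissible : admissible (fun y : 'cV[R]_din => y).
  by split; [move=> y; exact: cvg_id | right; split => // V y].
exact: (admissible_decision_region_unbounded sigmaC sigmaP hwidth id_admissible
  (j := j)).

Qed.
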